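(* Consider the D2EAL algorithm (without periodic reset) described in the context with horizon $T\ge1$ and $\eta_\alpha,\eta_w>0$. Assume (Assumption 2) that $|l(x_1,y)-l(x_2,y)|\le L_1\|x_1-x_2\|$ for all $x_1,x_2\in\mathcal A$, $y\in\mathcal Y$, for some constant $L_1\ge0$; and (Assumption 3) that there are nonnegative numbers $\delta_1,\dots,\delta_T$ with $\|f_{t,i}-f_{t,j}\|\le\delta_t$ for all $i,j\in[N]$ and $t=1,\dots,T$. Let $\Delta_o\ge\sum_{t=1}^T\delta_t$ and let $i^*\in\arg\min_{j\in[N]}L_{T,j}$. Then for every $i\in[N]$, $$R_i^{GI}(T):=\bar L_{T,i}-L_{T,i^*}\le\frac{\eta_\alpha T}{8}+\frac{\log2}{\eta_\alpha}+L_1\Delta_o.$$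
   Context: Setup. There are $N\ge 1$ agents indexed by $i\in[N]$ and a horizon $T\ge1$. The outcome space $\mathcal Y$ and action space $\mathcal A$ are convex subsets of $\mathbb R^n$, $\|\cdot\|$ is the Euclidean norm. The loss $l:\mathcal A\times\mathcal Y\to[0,1]$ is convex in its first argument. The target sequence $y_1,\dots,y_T\in\mathcal Y$ is arbitrary. For each agent $i$ and each $t\ge1$, an ''expert'' supplies an arbitrary prediction $f_{t,i}\in\mathcal A$ of $y_t$ (available at time $t-1$). Agents communicate over a time-varying undirected graph; $\Omega_i(t)$ is the set of neighbours of agent $i$ at time $t$, $\Lambda_i(t):=\Omega_i(t)\cup\{i\}$ and $d_i(t):=|\Lambda_i(t)|$. D2EAL (without periodic reset). Initialize $\hat f_{0,i}=f_{1,i}$, $\hat\alpha_i(0)=\hat\alpha'_i(0)=\hat w_{ii}(0)=1$ for all $i$. For $t=0,1,\dots,T-1$, each agent $i$ computes: $\alpha_i(t)=\hat\alpha_i(t)/(\hat\alpha_i(t)+\hat\alpha'_i(t))$; individual prediction $\bar f_{t+1,i}=\alpha_i(t)f_{t+1,i}+(1-\alpha_i(t))\hat f_{t,i}$; social weights $w_{ij}(t)=\hat w_{jj}(t)/\sum_{j'\in\Lambda_i(t)}\hat w_{j'j'}(t)$ for $j\in\Lambda_i(t)$ and $w_{ij}(t)=0$ otherwise; social prediction $\hat f_{t+1,i}=\sum_{j\in\Lambda_i(t)}w_{ij}(t)\bar f_{t+1,j}$. After $y_{t+1}$ is revealed, define the losses $l_{t+1,i}=l(f_{t+1,i},y_{t+1})$,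 $\hat l^-_{t+1,i}=l(\hat f_{t,i},y_{t+1})$, $\bar l_{t+1,i}=l(\bar f_{t+1,i},y_{t+1})$, $\hat l_{t+1,i}=l(\hat f_{t+1,i},y_{t+1})$, and update $\hat\alpha_i(t+1)=\hat\alpha_i(t)e^{-\eta_\alpha l_{t+1,i}}$, $\hat\alpha'_i(t+1)=\hat\alpha'_i(t)e^{-\eta_\alpha \hat l^-_{t+1,i}}$, $\hat w_{ii}(t+1)=\hat w_{ii}(t)e^{-\eta_w\bar l_{t+1,i}}$. Cumulative losses: $L_{T,i}=\sum_{t=1}^T l_{t,i}$, $\hat L^-_{T,i}=\sum_{t=1}^T\hat l^-_{t,i}$, $\bar L_{T,i}=\sum_{t=1}^T\bar l_{t,i}$, $\hat L_{T,i}=\sum_{t=1}^T\hat l_{t,i}$. *)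

From HB Require Import structures.
From mathcomp Require Import all_boot all_order all_algebra.
From mathcomp Require Import reals.
From mathcomp Require Import sequences.
From mathcomp.analysis Require Import exp.
Set Implicit Arguments. Unset Strict Implicit. Unset Printing Implicit Defensive.
Import Order.TTheory GRing.Theory Num.Theory.
Local Open Scope ring_scope.

Section D2EAL.
Variable R : realType.
Variable n N : nat.

Definition enorm (x : 'rV[R]_n) : R := Num.sqrt (\sum_(k < n) x ord0 k ^+ 2).

Definition convex_set (A : 'rV[R]_n -> Prop) : Prop :=
  forall x z (lam : R), A x -> A z -> 0 <= lam <= 1 ->
    A (lam *: x + (1 - lam) *: z).

Definition convex_in_first (A Y : 'rV[R]_n -> Prop)
  (l : 'rV[R]_n -> 'rV[R]_n -> R) : Prop :=
  forall x z y (lam : R), A x -> A z -> Y y -> 0 <= lam <= 1 ->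
    l (lam *: x + (1 - lam) *: z) y <= lam * l x y + (1 - lam) * l z y.

Variable l : 'rV[R]_n -> 'rV[R]_n -> R.      (* loss l(action, outcome) *)
Variable f : nat -> 'I_N -> 'rV[R]_n.         (* expert predictions f_{t,i}, t >= 1 *)
Variable y : nat -> 'rV[R]_n.                 (* targets y_t, t >= 1 *)
Variable adj : nat -> 'I_N -> 'I_N -> bool.   (* j \in Omega_i(t) iff adj t i j *)
Variables eta_a eta_w : R.

Definition inLambda (t : nat) (i j : 'I_N) : bool := (j == i) || adj t i j.

(* state at time t: (hat alpha_i(t), hat alpha'_i(t), hat w_ii(t), hat f_{t,i}) *)
Definition state := (('I_N -> R) * ('I_N -> R) * ('I_N -> R) * ('I_N -> 'rV[R]_n))%type.

Definition alpha_of (s : state) (i : 'I_N) : R :=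
  let: (ha, ha', _, _) := s in ha i / (ha i + ha' i).

(* individual prediction bar f_{t+1,i} computed from the state at time t *)
Definition fbar_of (t : nat) (s : state) (i : 'I_N) : 'rV[R]_n :=
  let: (_, _, _, hf) := s in
  alpha_of s i *: f t.+1 i + (1 - alpha_of s i) *: hf i.

Definition w_of (t : nat) (s : state) (i j : 'I_N) : R :=
  let: (_, _, hw, _) := s in
  if inLambda t i j then hw j / (\sum_(j' | inLambda t i j') hw j') else 0.

Definition step (t : nat) (s : state) : state :=
  let: (ha, ha', hw, hf) := s in
  (fun i => ha i * expR (- (eta_a * l (f t.+1 i) (y t.+1))),
   fun i => ha' i * expR (- (eta_a * l (hf i) (y t.+1))),
   fun i => hw i * expR (- (eta_w * l (fbar_of t s i) (y t.+1))),
   fun i => \sum_(j | inLambda t i j) w_of t s i j *: fbar_of t s j).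

Fixpoint state_at (t : nat) : state :=
  match t with
  | 0 => (fun _ => 1, fun _ => 1, fun _ => 1, fun i => f 1 i)
  | t'.+1 => step t' (state_at t')
  end.

(* bar f_{t,i} for t >= 1 *)
Definition fbar (t : nat) (i : 'I_N) : 'rV[R]_n := fbar_of t.-1 (state_at t.-1) i.

Definition fhat (t : nat) (i : 'I_N) : 'rV[R]_n := (state_at t).2 i.

Definition Lcum (T : nat) (i : 'I_N) : R := \sum_(1 <= t < T.+1) l (f t i) (y t).
Definition Lbar (T : nat) (i : 'I_N) : R := \sum_(1 <= t < T.+1) l (fbar t i) (y t).

End D2EAL.

From Pilot Require Import Defs.
From HB Require Import structures.
From mathcomp Require Import all_boot all_order all_algebra.
From mathcomp Require Import reals.
From mathcomp Require Import sequences.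
From mathcomp.analysis Require Import exp.
From mathcomp Require Import boolp classical_sets topology normedtype derive realfun.
From mathcomp Require Import ring lra.
Import numFieldNormedType.Exports.
Import Order.TTheory GRing.Theory Num.Theory.
Local Open Scope ring_scope.

(* The weights alpha_hat_i, alpha_hat'_i form an exponentially weighted
   forecaster over the two predictions f_{t,i} and fhat_{t-1,i}, so by
   Hoeffding's lemma and convexity of the loss the potential
   W_t = alpha_hat_i(t) + alpha_hat'_i(t) satisfies
   W_{t+1} <= W_t exp(-eta l(fbar_{t+1,i}, y_{t+1}) + eta^2/8).  Hence
   exp(-eta L_{T,i}) = alpha_hat_i(T) <= W_T <= 2 exp(-eta Lbar_{T,i} + T eta^2/8),
   and Assumptions 2 and 3 bound L_{T,i} - L_{T,i*} by L1 * sum_t delta_t. *)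

Lemma ger0_is_derive_ndecry {R : realType} {h h' : R -> R} {a x z : R} :
  (forall r : R, is_derive r 1 h (h' r)) -> (forall r, a < r -> 0 <= h' r) ->
  a <= x -> x <= z -> h x <= h z.
Proof.
move=> dh h'_ge0; apply: ger0_derive1_ndecry.
- by move=> r _; have [] := dh r.
- by move=> r; rewrite in_itv /= andbT derive1E (@derive_val _ _ _ _ _ _ _ (dh r)); exact: h'_ge0.
- by apply: derivable_within_continuous => r _; have [] := dh r.
Qed.

Section TwoPointHoeffding.
Context {R : realType} {p u v : R}.
Hypotheses (p01 : 0 <= p <= 1) (u01 : 0 <= u <= 1) (v01 : 0 <= v <= 1).

(* M is the moment generating function of -X, where X takes the value u with
   probability p and v otherwise; P / M and (Q M - P^2) / M^2 are the mean and
   the variance of X under the exponentially tilted law. *)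
Let q := 1 - p.
Let m := p * u + q * v.
Let M (s : R) := p * expR (- u * s) + q * expR (- v * s).
Let P (s : R) := p * u * expR (- u * s) + q * v * expR (- v * s).
Let Q (s : R) := p * u ^+ 2 * expR (- u * s) + q * v ^+ 2 * expR (- v * s).

Let q_ge0 : 0 <= q. Proof. by rewrite subr_ge0; case/andP: p01. Qed.

Let M_gt0 (s : R) : 0 < M s.
Proof.
rewrite /M; have [a_gt0 b_gt0] := (expR_gt0 (- u * s), expR_gt0 (- v * s)).
case/andP: p01 => p_ge0 _; have [p_gt0 | p_le0] := ltrP 0 p.
  by rewrite ltr_pwDl ?mulr_gt0 // mulr_ge0 // ltW.
rewrite /q; have -> : p = 0 by apply/le_anti; rewrite p_le0.
by rewrite subr0 mul0r add0r mul1r.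
Qed.

Let is_derive_M (s : R) : is_derive s 1 M (- P s).
Proof. by rewrite /M; apply: is_derive_eq; rewrite /P /GRing.scale /=; ring. Qed.

Let is_derive_P (s : R) : is_derive s 1 P (- Q s).
Proof. by rewrite /P; apply: is_derive_eq; rewrite /Q /GRing.scale /=; ring. Qed.

Let tilted_variance_le (s : R) : 4 * (Q s * M s - P s ^+ 2) <= M s ^+ 2.
Proof.
rewrite /M /P /Q; set a := expR (- u * s); set b := expR (- v * s).
have [a_ge0 b_ge0] : 0 <= a /\ 0 <= b by split; apply: ltW; apply: expR_gt0.
case/andP: p01 => p_ge0 _; case/andP: u01 => u_ge0 u_le1; case/andP: v01 => v_ge0 v_le1.
have pqab_ge0 : 0 <= p * q * a * b by rewrite !mulr_ge0.
have uv2_le1 : (u - v) ^+ 2 <= 1 by nra.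
have amgm := sqr_ge0 (p * a - q * b).
have -> : Q s * M s - P s ^+ 2 = p * q * a * b * (u - v) ^+ 2 by rewrite /M /P /Q -/a -/b; ring.
nra.
Qed.

Let tilted_mean_ge (s : R) : 0 <= s -> m - s / 4 <= P s / M s.
Proof.
move=> s_ge0.
pose h x := P x * (M x)^-1 + 4^-1 * x.
have dh (x : R) : is_derive x 1 h ((P x ^+ 2 - Q x * M x) / M x ^+ 2 + 4^-1).
  have dMV := is_deriveV (lt0r_neq0 (M_gt0 x)) (is_derive_M x).
  have dPM := is_deriveM (is_derive_P x) dMV.
  have d4 : is_derive x 1 (fun s => 4^-1 * s) 4^-1.
    by apply: is_derive_eq; rewrite /GRing.scale /= mulr1.
  apply: is_derive_eq (is_deriveD dPM d4) _.
  rewrite /GRing.scale /=; field; exact: lt0r_neq0 (M_gt0 x).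
have h'_ge0 (x : R) : 0 < x -> 0 <= (P x ^+ 2 - Q x * M x) / M x ^+ 2 + 4^-1.
  move=> _; have M_neq0 := lt0r_neq0 (M_gt0 x).
  have -> : (P x ^+ 2 - Q x * M x) / M x ^+ 2 + 4^-1 =
            (M x ^+ 2 - 4 * (Q x * M x - P x ^+ 2)) / (4 * M x ^+ 2) by field.
  by rewrite divr_ge0 ?subr_ge0 ?tilted_variance_le // mulr_ge0 ?sqr_ge0.
have := ger0_is_derive_ndecry dh h'_ge0 (lexx 0) s_ge0.
rewrite /h /M /P !mulr0 expR0 !mulr1 /m /q.
have -> : p + (1 - p) = 1 by ring.
rewrite invr1 mulr1 addr0; lra.
Qed.

Lemma hoeffding_two_point {eta : R} : 0 <= eta ->
  p * expR (- (eta * u)) + (1 - p) * expR (- (eta * v)) <=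
  expR (- (eta * (p * u + (1 - p) * v)) + eta ^+ 2 / 8).
Proof.
move=> eta_ge0.
pose g (s : R) := expR (m * s - s ^+ 2 / 8).
pose h s := - (M s * g s).
have dh (x : R) : is_derive x 1 h (g x * (P x - M x * (m - x / 4))).
  by rewrite /h /g /M; apply: is_derive_eq; rewrite /P /GRing.scale /=; field.
have h'_ge0 (x : R) : 0 < x -> 0 <= g x * (P x - M x * (m - x / 4)).
  move=> /ltW x_ge0; apply: mulr_ge0; first exact/ltW/expR_gt0.
  by rewrite subr_ge0 mulrC -ler_pdivlMr ?M_gt0 // tilted_mean_ge.
have := ger0_is_derive_ndecry dh h'_ge0 (lexx 0) eta_ge0.
rewrite /h /g /M /m /q !mulr0 expr0n /= mul0r subr0 expR0 !mulr1 lerN2 subrKC.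
have -> : - (eta * (p * u + (1 - p) * v)) + eta ^+ 2 / 8 =
          - ((p * u + (1 - p) * v) * eta - eta ^+ 2 / 8) by ring.
have -> : - (eta * u) = - u * eta by ring.
have -> : - (eta * v) = - v * eta by ring.
rewrite expRN; set E := expR (_ - _) => ME_le1.
by rewrite -(ler_pM2r (expR_gt0 _ : 0 < E)) mulVf ?gt_eqF ?expR_gt0.
Qed.

End TwoPointHoeffding.

Lemma convex_set_barycenter {R : realType} {n : nat} (A : 'rV[R]_n -> Prop) (I : Type)
  (s : seq I) (w : I -> R) (x : I -> 'rV[R]_n) :
  convex_set A -> (forall i, 0 < w i) -> (forall i, A (x i)) -> (0 < size s)%N ->
  A (\sum_(i <- s) (w i / \sum_(j <- s) w j) *: x i).
Proof.
move=> convA w_gt0 Ax; elim: s => [//|a [|b s] IHs] _.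
  by rewrite !big_cons !big_nil !addr0 divff ?scale1r ?gt_eqF.
set S := \sum_(j <- b :: s) w j.
have S_gt0 : 0 < S by rewrite /S big_cons ltr_pwDl ?sumr_ge0 // => j _; exact: ltW.
set W := \sum_(j <- a :: b :: s) w j.
have W_def : W = w a + S by rewrite /W big_cons.
have W_gt0 : 0 < W by rewrite W_def addr_gt0.
rewrite big_cons.
have -> : \sum_(i <- b :: s) (w i / W) *: x i =
          (1 - w a / W) *: \sum_(i <- b :: s) (w i / S) *: x i.
  rewrite scaler_sumr; apply: eq_bigr => i _; rewrite scalerA; congr (_ *: _).
  by rewrite W_def; field; rewrite -W_def !gt_eqF.
apply: convA => //; first exact: IHs.
apply/andP; split; first by rewrite divr_ge0 ?ltW.
by rewrite ler_pdivrMr // mul1r W_def lerDl ltW.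
Qed.

Section D2EALAgainstOwnExpert.
Context {R : realType} {n N : nat} {A Y : 'rV[R]_n -> Prop}.
Variables (l : 'rV[R]_n -> 'rV[R]_n -> R) (f : nat -> 'I_N -> 'rV[R]_n).
Variables (y : nat -> 'rV[R]_n) (adj : nat -> 'I_N -> 'I_N -> bool).
Variables (eta_a eta_w : R).
Hypotheses (convA : convex_set A) (fA : forall t i, (0 < t)%N -> A (f t i)).
Hypotheses (yY : forall t, (0 < t)%N -> Y (y t)).
Hypotheses (l01 : forall a b, A a -> Y b -> 0 <= l a b <= 1).
Hypothesis l_convex : convex_in_first A Y l.
Hypothesis eta_a_gt0 : 0 < eta_a.

Let st := state_at l f y adj eta_a eta_w.
Let ahat t := (st t).1.1.1.
Let ahat' t := (st t).1.1.2.
Let what t := (st t).1.2.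
Local Notation fhat := (Defs.fhat l f y adj eta_a eta_w).
Local Notation fbar := (Defs.fbar l f y adj eta_a eta_w).
Let alpha t i := ahat t i / (ahat t i + ahat' t i).
Let Lc := Lcum l f y.
Let Lb := Lbar l f y adj eta_a eta_w.

Let fbar_succ t i : fbar t.+1 i =
  alpha t i *: f t.+1 i + (1 - alpha t i) *: fhat t i.
Proof. by rewrite /Defs.fbar /alpha /ahat /ahat' /Defs.fhat /st /=; case: state_at => [[[]]]. Qed.

Let ahat_succ t i : ahat t.+1 i = ahat t i * expR (- (eta_a * l (f t.+1 i) (y t.+1))).
Proof. by rewrite /ahat /st /=; case: state_at => [[[]]]. Qed.

Let ahat'_succ t i : ahat' t.+1 i = ahat' t i * expR (- (eta_a * l (fhat t i) (y t.+1))).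
Proof. by rewrite /ahat' /Defs.fhat /st /=; case: state_at => [[[]]]. Qed.

Let what_succ t i :
  what t.+1 i = what t i * expR (- (eta_w * l (fbar t.+1 i) (y t.+1))).
Proof. by rewrite /what /Defs.fbar /st /=; case: state_at => [[[]]]. Qed.

Let fhat_succ t i : fhat t.+1 i =
  \sum_(j | inLambda adj t i j)
    (what t j / \sum_(k | inLambda adj t i k) what t k) *: fbar t.+1 j.
Proof.
rewrite /Defs.fhat /what /Defs.fbar /st /=; case: state_at => [[[ha ha'] hw] hf] /=.
by apply: eq_bigr => j ->; rewrite /w_of.
Qed.

Let ahat_gt0 t i : 0 < ahat t i.
Proof. by elim: t => [|t IHt]; rewrite ?ahat_succ ?mulr_gt0 ?expR_gt0. Qed.

Let ahat'_gt0 t i : 0 < ahat' t i.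
Proof. by elim: t => [|t IHt]; rewrite ?ahat'_succ ?mulr_gt0 ?expR_gt0. Qed.

Let what_gt0 t i : 0 < what t i.
Proof. by elim: t i => [|t IHt] i; rewrite ?what_succ ?mulr_gt0 ?expR_gt0. Qed.

Let alpha01 t i : 0 <= alpha t i <= 1.
Proof.
have [a_gt0 a'_gt0] := (ahat_gt0 t i, ahat'_gt0 t i).
apply/andP; split; first by rewrite divr_ge0 ?ltW ?addr_gt0.
by rewrite ler_pdivrMr ?addr_gt0 // mul1r lerDl ltW.
Qed.

Let fhat_in_A t i : A (fhat t i).
Proof.
elim: t i => [|t IHt] i; first exact: fA.
rewrite fhat_succ -big_filter; under eq_bigr do rewrite -big_filter.
apply: convex_set_barycenter => // [j|].
  by rewrite fbar_succ; apply: convA; [exact: fA | exact: IHt | exact: alpha01].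
have : i \in [seq j <- index_enum 'I_N | inLambda adj t i j].
  by rewrite mem_filter /inLambda eqxx mem_index_enum.
by case: [seq j <- _ | _].
Qed.

Let ahat_cumloss t i : ahat t i = expR (- (eta_a * Lc t i)).
Proof.
elim: t => [|t IHt]; first by rewrite /Lc /Lcum big_geq // mulr0 oppr0 expR0.
by rewrite ahat_succ IHt /Lc /Lcum [in RHS]big_nat_recr //= mulrDr opprD expRD.
Qed.

Let potential_succ_le t i : ahat t.+1 i + ahat' t.+1 i <=
  (ahat t i + ahat' t i) *
  expR (- (eta_a * l (fbar t.+1 i) (y t.+1)) + eta_a ^+ 2 / 8).
Proof.
set u := l (f t.+1 i) (y t.+1); set v := l (fhat t i) (y t.+1).
have W_gt0 : 0 < ahat t i + ahat' t i by rewrite addr_gt0.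
have -> : ahat t.+1 i + ahat' t.+1 i = (ahat t i + ahat' t i) *
    (alpha t i * expR (- (eta_a * u)) + (1 - alpha t i) * expR (- (eta_a * v))).
  by rewrite ahat_succ ahat'_succ /alpha; field; rewrite gt_eqF.
have u01 : 0 <= u <= 1 by apply: l01; [exact: fA | exact: yY].
have v01 : 0 <= v <= 1 by apply: l01; [exact: fhat_in_A | exact: yY].
rewrite ler_pM2l //.
apply: le_trans (hoeffding_two_point (alpha01 t i) u01 v01 (ltW eta_a_gt0)) _.
rewrite ler_expR lerD2r lerN2 ler_pM2l // fbar_succ.
by apply: l_convex; [exact: fA | exact: fhat_in_A | exact: yY | exact: alpha01].
Qed.

Let potential_le t i :
  ahat t i + ahat' t i <= 2 * expR (- (eta_a * Lb t i) + t%:R * (eta_a ^+ 2 / 8)).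
Proof.
elim: t => [|t IHt].
  by rewrite /Lb /Lbar big_geq // mulr0 oppr0 mul0r addr0 expR0 mulr1 /ahat /ahat' /= -[2]/(1 + 1).
apply: le_trans (potential_succ_le t i) _.
apply: le_trans (ler_wpM2r (ltW (expR_gt0 _)) IHt) _.
rewrite -mulrA -expRD /Lb /Lbar (big_nat_recr t.+1) //= -natr1.
rewrite le_eqVlt; apply/orP; left; apply/eqP; congr (_ * expR _); ring.
Qed.

Lemma own_expert_regret T i :
  Lb T i - Lc T i <= eta_a * T%:R / 8 + ln 2 / eta_a.
Proof.
have : - (eta_a * Lc T i) <= ln 2 + (- (eta_a * Lb T i) + T%:R * (eta_a ^+ 2 / 8)).
  rewrite -ler_expR expRD lnK ?posrE // -ahat_cumloss.
  by apply: le_trans (potential_le T i); rewrite lerDl ltW.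
move=> exp_bound.
suff : Lb T i - Lc T i - eta_a * T%:R / 8 <= ln 2 / eta_a by lra.
by rewrite ler_pdivlMr //; nra.
Qed.

End D2EALAgainstOwnExpert.

Lemma Lcum_sub_le {R : realType} {n N : nat} {A Y : 'rV[R]_n -> Prop}
    {l : 'rV[R]_n -> 'rV[R]_n -> R} {f : nat -> 'I_N -> 'rV[R]_n} {y : nat -> 'rV[R]_n}
    {L1 : R} {delta : nat -> R} {T : nat} {i j : 'I_N} :
  (forall t i, (0 < t)%N -> A (f t i)) -> (forall t, (0 < t)%N -> Y (y t)) ->
  0 <= L1 ->
  (forall x1 x2 b, A x1 -> A x2 -> Y b -> `|l x1 b - l x2 b| <= L1 * enorm (x1 - x2)) ->
  (forall t, (1 <= t <= T)%N -> enorm (f t i - f t j) <= delta t) ->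
  Lcum l f y T i - Lcum l f y T j <= L1 * \sum_(1 <= t < T.+1) delta t.
Proof.
move=> fA yY L1_ge0 l_lip f_close.
rewrite /Lcum -sumrB mulr_sumr; apply: ler_sum_nat => t /andP[t_gt0 t_leT].
apply: le_trans (ler_norm _) _.
apply: le_trans (l_lip _ _ _ (fA t i t_gt0) (fA t j t_gt0) (yY t t_gt0)) _.
by rewrite ler_wpM2l // f_close ?t_gt0.
Qed.

Theorem theorem1 (R : realType) (n N : nat)
  (A Y : 'rV[R]_n -> Prop)
  (l : 'rV[R]_n -> 'rV[R]_n -> R)
  (f : nat -> 'I_N -> 'rV[R]_n) (y : nat -> 'rV[R]_n)
  (adj : nat -> 'I_N -> 'I_N -> bool)
  (eta_a eta_w L1 Delta_o : R) (delta : nat -> R) (T : nat) (istar : 'I_N) :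
  (0 < T)%N ->
  0 < eta_a -> 0 < eta_w ->
  convex_set A -> convex_set Y ->
  (forall t i, (0 < t)%N -> A (f t i)) ->
  (forall t, (0 < t)%N -> Y (y t)) ->
  (forall t i j, adj t i j = adj t j i) ->
  (forall a b, A a -> Y b -> 0 <= l a b <= 1) ->
  convex_in_first A Y l ->
  (* Assumption 2 *)
  0 <= L1 ->
  (forall x1 x2 b, A x1 -> A x2 -> Y b ->
     `|l x1 b - l x2 b| <= L1 * enorm (x1 - x2)) ->
  (* Assumption 3 *)
  (forall t, 0 <= delta t) ->
  (forall t i j, (1 <= t <= T)%N -> enorm (f t i - f t j) <= delta t) ->
  \sum_(1 <= t < T.+1) delta t <= Delta_o ->
  (forall j, Lcum l f y T istar <= Lcum l f y T j) ->
  forall i : 'I_N,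
    Lbar l f y adj eta_a eta_w T i - Lcum l f y T istar
      <= eta_a * T%:R / 8 + ln 2 / eta_a + L1 * Delta_o.
Proof.
(* The bound holds against every expert. *)
move=> _ eta_a_gt0 _ convA _ fA yY _ l01 l_convex L1_ge0 l_lip _ f_close delta_le _ i.
have own_regret := own_expert_regret l f y adj eta_a eta_w convA fA yY l01 l_convex eta_a_gt0 T i.
have gap := Lcum_sub_le fA yY L1_ge0 l_lip (fun t tT => f_close t i istar tT).
have := ler_wpM2l L1_ge0 delta_le.
lra.
Qed.
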